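(* Let $X$ be an arbitrary topological space and let $U\subseteq X$ be a subset consisting of pairwise topologically indistinguishable points (i.e. for every open $V\subseteq X$, if $U\cap V\neq\emptyset$ then $U\subseteq V$). Let $f:X\to X$ be a (not necessarily continuous) bijection such that $f|_{X\setminus U}$ is the identity. Then (1) $f$ is a homeomorphism; and (2) $f$ and $\mathrm{Id}_X$ are isotopic, and moreover isotopic relative to $X\setminus U$ (i.e. via an isotopy $H$ with $H(x,t)=x$ for all $x\in X\setminus U$ and all $t$).
   Context: Two homeomorphisms $f,g$ of $X$ are isotopic if there is a continuous map $H:X\times[0,1]\to X$ such that each $H_t=H(\cdot,t)$ is a homeomorphism of $X$, $H_0=f$ and $H_1=g$. *)

From HB Require Import structures.
From mathcomp Require Import all_boot all_order all_algebra.
From mathcomp Require Import all_classical all_reals all_analysis.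
Set Implicit Arguments. Unset Strict Implicit. Unset Printing Implicit Defensive.
Import Order.TTheory GRing.Theory Num.Theory.
Local Open Scope classical_set_scope.
Local Open Scope ring_scope.

Definition homeomorphism (X : topologicalType) (f : X -> X) : Prop :=
  exists g : X -> X, [/\ cancel f g, cancel g f, continuous f & continuous g].

Definition indistinguishable_set (X : topologicalType) (U : set X) : Prop :=
  forall V : set X, open V -> U `&` V !=set0 -> U `<=` V.

(* The unit interval is
   `[0,1] in R, with the subspace topology of the product X * R. *)
Definition isotopic_rel (R : realType) (X : topologicalType)
    (A : set X) (f g : X -> X) : Prop :=
  exists H : X * R -> X,
    [/\ {within [set: X] `*` [set` `[0%R, 1%R]], continuous H},
        (forall t : R, [set` `[0%R, 1%R]] t -> homeomorphism (fun x => H (x, t))),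
        (forall x, H (x, 0%R) = f x),
        (forall x, H (x, 1%R) = g x) &
        (forall x t, A x -> [set` `[0%R, 1%R]] t -> H (x, t) = x)].

Definition isotopic (R : realType) (X : topologicalType) (f g : X -> X) : Prop :=
  isotopic_rel R set0 f g.

From HB Require Import structures.
From mathcomp Require Import all_boot all_order all_algebra.
From mathcomp Require Import all_classical all_reals all_analysis.
Local Open Scope classical_set_scope.
Local Open Scope ring_scope.

(* Open sets cannot separate points of U, so a map h that sends
   U into U and fixes every point outside U satisfies V (h x) <-> V x for
   every open V: h x and x are topologically indistinguishable.  A map that
   is pointwise indistinguishable from a continuous map is itself
   continuous, since both have the same preimages of open sets.
   - A bijection f fixing X \ U maps U into U, and so does its inverse,
     which also fixes X \ U; hence both are continuous and f is a
     homeomorphism.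
   - The "jump" H(x,t) = f x if t = 0, H(x,t) = x otherwise, is pointwise
     indistinguishable from the continuous projection (x,t) |-> x, so it is
     continuous; each H_t is f or the identity, and H fixes X \ U. *)

(* Maps with the same open-set membership at every point have the same
   preimages of open sets, so continuity transfers from one to the other. *)
Lemma continuous_indistinguishable {X Y : topologicalType} (p g : Y -> X) :
  continuous p -> (forall V : set X, open V -> forall y, V (g y) <-> V (p y)) ->
  continuous g.
Proof.
move=> cp gp; apply/continuousP => V oV.
have -> : g @^-1` V = p @^-1` V.
  by rewrite eqEsubset; split => y /= Vy; apply/(gp V oV).
by move/continuousP: cp; apply.
Qed.

Lemma isotopic_rel_sub {R : realType} {X : topologicalType} {A B : set X}
    {f g : X -> X} :
  A `<=` B -> isotopic_rel R B f g -> isotopic_rel R A f g.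
Proof.
move=> AB [H [cH homH H0 H1 HB]]; exists H; split => // x t Ax.
exact/HB/AB.
Qed.

Section IndistinguishableSet.
Context {X : topologicalType} {U : set X}.
Hypothesis indU : indistinguishable_set U.

Lemma indistinguishable_image {h : X -> X} :
  (forall x, U x -> U (h x)) -> (forall x, ~ U x -> h x = x) ->
  forall V : set X, open V -> forall x, V (h x) <-> V x.
Proof.
move=> hU hfix V oV x; have [Ux|nUx] := pselect (U x); last by rewrite hfix.
split => Vx.
- by apply: (indU V oV) => //; exists (h x); split => //; exact: hU.
- by apply: (indU V oV) => //; [exists x | exact: hU].
Qed.

(* Such a map is continuous, being indistinguishable from the identity. *)
Lemma continuous_fixing_outside (h : X -> X) :
  (forall x, U x -> U (h x)) -> (forall x, ~ U x -> h x = x) -> continuous h.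
Proof.
move=> hU hfix; apply: (@continuous_indistinguishable X X id).
  by move=> x; exact: cvg_id.
exact: indistinguishable_image.
Qed.

End IndistinguishableSet.

Lemma bij_fixing_outside_stable {X : Type} {U : set X} {f g : X -> X} :
  cancel f g -> (forall x, ~ U x -> f x = x) -> forall x, U x -> U (f x).
Proof.
move=> fK ffix x Ux; apply: contrapT => nUfx.
have fxx : g (f (f x)) = g (f x) by rewrite ffix.
by rewrite !fK in fxx; apply: nUfx; rewrite fxx.
Qed.

Lemma inverse_fixing_outside {X : Type} {U : set X} {f g : X -> X} :
  cancel f g -> (forall x, ~ U x -> f x = x) -> forall x, ~ U x -> g x = x.
Proof. by move=> fK ffix x nUx; rewrite -{1}(ffix _ nUx) fK. Qed.

Lemma homeomorphism_fixing_outside {X : topologicalType} {U : set X}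
    {f : X -> X} :
  indistinguishable_set U -> bijective f -> (forall x, ~ U x -> f x = x) ->
  homeomorphism f.
Proof.
move=> indU [g fK gK] ffix.
have gfix := inverse_fixing_outside fK ffix.
exists g; split => //; apply: (continuous_fixing_outside indU) => //.
- exact: bij_fixing_outside_stable fK ffix.
- exact: bij_fixing_outside_stable gK gfix.
Qed.

Definition jump_isotopy {R : realType} {X : Type} (f : X -> X) (p : X * R) : X :=
  if p.2 == 0 then f p.1 else p.1.

Lemma jump_isotopic_rel (R : realType) {X : topologicalType} {U : set X}
    {f : X -> X} :
  indistinguishable_set U -> bijective f -> (forall x, ~ U x -> f x = x) ->
  isotopic_rel R (~` U) f id.
Proof.
move=> indU fbij ffix; have [g fK _] := fbij.
have fU := bij_fixing_outside_stable fK ffix.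
exists (jump_isotopy f); split.
- apply: continuous_subspaceT; apply: (@continuous_indistinguishable _ _ fst).
    by move=> x; exact: cvg_fst.
  move=> V oV [x t]; rewrite /jump_isotopy /=; case: ifP => _ //.
  exact: (indistinguishable_image indU fU ffix V oV x).
all: rewrite /jump_isotopy /=.
- move=> t _; case: (t == 0).
    exact: homeomorphism_fixing_outside indU fbij ffix.
  by exists id; split => // x; exact: cvg_id.
- by move=> x; rewrite eqxx.
- by move=> x; rewrite GRing.oner_eq0.
- by move=> x t nUx _; case: ifP => // _; exact: ffix.
Qed.

Theorem lemma2p1 (R : realType) (X : topologicalType) (U : set X) (f : X -> X) :
  indistinguishable_set U ->
  bijective f ->
  (forall x, ~ U x -> f x = x) ->
  homeomorphism f /\ isotopic R f id /\ isotopic_rel R (~` U) f id.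
Proof.
move=> indU fbij ffix.
have iso := jump_isotopic_rel R indU fbij ffix.
split; first exact: homeomorphism_fixing_outside indU fbij ffix.
split => //; apply: isotopic_rel_sub iso; exact: sub0set.
Qed.
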